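(* Let $\pi$ be drawn uniformly at random among all permutations of $[n]$, independently of $\mathbf v\sim\mathcal F$. For every agent $i\in[n]$, every price $p>0$, and every $\alpha>0$, \[ \mathbb{E}_{\mathbf v,\pi}\Big[\min\Big\{\alpha,\sum_{j\in B_\pi(i)}y^*_j(v_j,p)\Big\}\Big]\ \le\ \max\{\alpha,1/2\}\;\mathbb{E}_{\mathbf v,\pi}\Big[\sum_{j\in[n]}y_j(\mathbf v,p,\pi)\Big]. \]
   Context: There are $n$ agents $[n]$ and one divisible item of size $1$. Each agent $i$ has a non-decreasing concave valuation $v_i:[0,1]\to\mathbb{R}_{\ge0}$ drawn independently from a known distribution $\mathcal F_i$; $\mathbf v\sim\mathcal F=\mathcal F_1\times\cdots\times\mathcal F_n$. For a price $p>0$, $y^*_i(v_i,p)\in[0,1]$ denotes a maximizer of $z\mapsto v_i(z)-pz$ over $[0,1]$ (fixed measurable selection). For an ordering $\pi$ of $[n]$, $B_\pi(i)$ is the set of agents acting before $i$ in $\pi$, and $y_i(\mathbf v,p,\pi)=\min\{y^*_i(v_i,p),\max\{0,1-\sum_{j\in B_\pi(i)}y^*_j(v_j,p)\}\}$ is the fraction agent $i$ buys in sequential posted pricing at price $p$ per unit in order $\pi$; in particular $\sum_j y_j(\mathbf v,p,\pi)=\min\{1,\sum_j y^*_j(v_j,p)\}$. *)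

From HB Require Import structures.
From mathcomp Require Import all_boot all_order all_algebra all_fingroup.
From mathcomp Require Import all_classical all_reals all_analysis.
Set Implicit Arguments. Unset Strict Implicit. Unset Printing Implicit Defensive.
Import Order.TTheory GRing.Theory Num.Theory.
Local Open Scope classical_set_scope.
Local Open Scope ring_scope.

(* Mutual independence of a finite family of random elements
   v i : Omega -> V (product rule for all families of measurable sets;
   taking some A i = setT gives the product rule for every subfamily). *)
Definition mutually_independent {d dV : measure_display}
  {Omega : measurableType d} {R : realType} (P : probability Omega R)
  {V : measurableType dV} {n : nat} (v : 'I_n -> Omega -> V) : Prop :=
  forall A : 'I_n -> set V, (forall i, measurable (A i)) ->
    P (\bigcap_(i in [set: 'I_n]) (v i @^-1` A i)) =
    (\prod_(i < n) fine (P (v i @^-1` A i)))%:E.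

(* An ordering pi of [n] is a permutation: agent j acts at position pi j.
   B_pi(i) = agents acting before i. *)
Definition before {n : nat} (pi : 'S_n) (i : 'I_n) : pred 'I_n :=
  fun j => (pi j < pi i)%N.

(* Fraction bought by agent i in sequential posted pricing:
   y_i = min{ y*_i, max{0, 1 - sum_{j in B_pi(i)} y*_j } },
   where ys j is y*_j(v_j,p). *)
Definition bought {R : realType} {n : nat} (ys : 'I_n -> R) (pi : 'S_n)
  (i : 'I_n) : R :=
  Num.min (ys i) (Num.max 0 (1 - \sum_(j | before pi i j) ys j)).

From HB Require Import structures.
From mathcomp Require Import all_boot all_order all_algebra all_fingroup.
From mathcomp Require Import all_classical all_reals all_analysis.
From mathcomp Require Import measurable_realfun zify ring lra.
Set Implicit Arguments. Unset Strict Implicit. Unset Printing Implicit Defensive.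
Import Order.TTheory GRing.Theory Num.Theory.
Local Open Scope classical_set_scope.
Local Open Scope ring_scope.

(* The inequality holds pointwise in the valuation profile: fix the demands
   ys j = y*_j(v_j,p) in [0,1] with total S.  Summing over all n! orders,
   (a) the agents before i demand in total at most n! * S / 2, because
       composing an order with the reversal of positions exchanges the
       agents before i with the agents after i;
   (b) in every order the goods sold, sum_j y_j, are at least min{1, S}:
       either nobody is rationed, or the first rationed agent exhausts the
       supply left by the (fully served) agents before him.
   Hence sum_pi min{alpha, before-sum} is bounded by n!*S/2 and by n!*alpha,
   so by max{alpha,1/2} * n! * min{1,S} <= max{alpha,1/2} * sum_pi sold.  The
   theorem follows by integrating this pointwise bound, using that the
   integral of nonnegative measurable functions commutes with finite sums
   and is monotone and positively homogeneous. *)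

Section PostedPricingOneProfile.
Variables (R : realType) (n : nat) (ys : 'I_n -> R).
Hypothesis ys01 : forall j, 0 <= ys j <= 1.

Let ys_ge0 j : 0 <= ys j. Proof. by case/andP: (ys01 j). Qed.

Lemma bought_ge0 pi j : 0 <= bought ys pi j.
Proof. by rewrite /bought le_min le_max lexx ys_ge0. Qed.

Lemma bought_le pi j : bought ys pi j <= ys j.
Proof. by rewrite /bought ge_min lexx. Qed.

Lemma bought_rationed pi j : bought ys pi j < ys j ->
  bought ys pi j = Num.max 0 (1 - \sum_(k | before pi j k) ys k).
Proof. by rewrite /bought minEle; case: ifP => // _; rewrite ltxx. Qed.

Lemma sum_bought_ge pi : Num.min 1 (\sum_j ys j) <= \sum_j bought ys pi j.
Proof.
have [/existsP [j0 rationed_j0]|] := boolP [exists j, bought ys pi j < ys j];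
  last first.
  move=> /existsPn none_rationed; rewrite ge_min; apply/orP; right.
  by apply: ler_sum => j _; rewrite leNgt none_rationed.
(* j is the first rationed agent in the order pi *)
have [j rationed_j first_j] := arg_minnP
  (fun k => nat_of_ord (pi k)) (rationed_j0 : (fun k => bought ys pi k < ys k) j0).
have served_before : \sum_(k | before pi j k) bought ys pi k =
                     \sum_(k | before pi j k) ys k.
  apply: eq_bigr => k k_before; apply/eqP; rewrite eq_le bought_le /=.
  rewrite leNgt; apply/negP => /first_j; rewrite /before in k_before; lia.
have others_ge0 :
    0 <= \sum_(k | ~~ before pi j k && (k != j)) bought ys pi k.
  by apply: sumr_ge0 => k _; apply: bought_ge0.
have left_le_max : 1 - \sum_(k | before pi j k) ys k <=
                   Num.max 0 (1 - \sum_(k | before pi j k) ys k).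
  by rewrite le_max lexx orbT.
rewrite [X in _ <= X](bigID (before pi j)) /= served_before.
rewrite [X in _ + X](bigD1 j) /=; last by rewrite /before ltnn.
have min_le1 : Num.min 1 (\sum_j ys j) <= 1 by rewrite ge_min lexx.
rewrite bought_rationed //; lra.
Qed.

Lemma before_rev_positions (pi : 'S_n) (i j : 'I_n) :
  before (pi * perm (@rev_ord_inj n)) i j = before pi j i.
Proof.
rewrite /before !permM !permE /=.
have := ltn_ord (pi i); have := ltn_ord (pi j); lia.
Qed.

Lemma sum_before_le_half i :
  2 * \sum_(pi : 'S_n) \sum_(j | before pi i j) ys j
    <= n`!%:R * \sum_j ys j.
Proof.
pose r : 'S_n := perm (@rev_ord_inj n).
have before_eq_after : \sum_(pi : 'S_n) \sum_(j | before pi i j) ys j =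
                       \sum_(pi : 'S_n) \sum_(j | before pi j i) ys j.
  rewrite (reindex_inj (mulIg r)) /=; apply: eq_bigr => pi _.
  by apply: eq_bigl => j; rewrite before_rev_positions.
rewrite mulr2n mulrDl mul1r {2}before_eq_after -big_split /=.
rewrite -[n`!]card_Sn mulr_natl -sumr_const; apply: ler_sum => pi _.
rewrite [X in _ <= X](bigID (before pi i)) lerD2l.
rewrite [X in X <= _]big_mkcond [X in _ <= X]big_mkcond /=.
apply: ler_sum => j _; rewrite /before.
by do 2 case: ifP => ?; rewrite ?lexx ?ys_ge0 //; lia.
Qed.

Lemma sum_min_before_le (i : 'I_n) (alpha : R) : 0 < alpha ->
  \sum_(pi : 'S_n) Num.min alpha (\sum_(j | before pi i j) ys j) <=
  Num.max alpha (1/2) * \sum_(pi : 'S_n) \sum_j bought ys pi j.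
Proof.
move=> alpha_gt0.
set S := \sum_j ys j; set N : R := n`!%:R.
have S_ge0 : 0 <= S by apply: sumr_ge0.
have N_ge0 : 0 <= N by rewrite ler0n.
have sum_const (c : R) : \sum_(pi : 'S_n) c = N * c.
  by rewrite sumr_const card_Sn mulr_natl.
have half_bound := sum_before_le_half i; rewrite -/S -/N in half_bound.
have sold_bound : N * Num.min 1 S <= \sum_(pi : 'S_n) \sum_j bought ys pi j.
  by rewrite -sum_const; apply: ler_sum => pi _; apply: sum_bought_ge.
have by_alpha : \sum_(pi : 'S_n) Num.min alpha (\sum_(j | before pi i j) ys j)
    <= N * alpha.
  by rewrite -sum_const; apply: ler_sum => pi _; rewrite ge_min lexx.
have by_before :
    \sum_(pi : 'S_n) Num.min alpha (\sum_(j | before pi i j) ys j)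
    <= \sum_(pi : 'S_n) \sum_(j | before pi i j) ys j.
  by apply: ler_sum => pi _; rewrite ge_min lexx orbT.
have alpha_le : alpha <= Num.max alpha (1/2) by rewrite le_max lexx.
have half_le : 1/2 <= Num.max alpha (1/2) by rewrite le_max lexx orbT.
apply: le_trans (ler_wpM2l (le_trans (ltW alpha_gt0) alpha_le) sold_bound).
have [S_le1|S_gt1] := leP S 1.
  have : (1/2) * (N * S) <= Num.max alpha (1/2) * (N * S).
    by apply: ler_wpM2r => //; apply: mulr_ge0.
  lra.
rewrite mulr1.
have : alpha * N <= Num.max alpha (1/2) * N by apply: ler_wpM2r.
lra.
Qed.

End PostedPricingOneProfile.

Lemma weighted_sum_integral_le (R : realType) (d : measure_display)
    (Omega : measurableType d) (P : {measure set Omega -> \bar R})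
    (I : finType) (F G : I -> Omega -> R) (c m : R) :
  0 <= c -> 0 <= m ->
  (forall k, measurable_fun setT (F k)) ->
  (forall k, measurable_fun setT (G k)) ->
  (forall k w, 0 <= F k w) -> (forall k w, 0 <= G k w) ->
  (forall w, \sum_k F k w <= c * \sum_k G k w) ->
  (m%:E * \sum_k \int[P]_w (F k w)%:E <=
   c%:E * (m%:E * \sum_k \int[P]_w (G k w)%:E))%E.
Proof.
move=> c_ge0 m_ge0 mF mG F_ge0 G_ge0 FG.
have sum_integral (H : I -> Omega -> R) :
    (forall k, measurable_fun setT (H k)) -> (forall k w, 0 <= H k w) ->
    (\sum_k \int[P]_w (H k w)%:E = \int[P]_w (\sum_k H k w)%:E)%E.
  move=> mH H_ge0; rewrite -ge0_integral_sum //.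
  - by apply: eq_integral => w _; rewrite sumEFin.
  - by move=> k; apply/measurable_EFinP.
  - by move=> k w _; rewrite lee_fin.
have mG_sum : measurable_fun setT (fun w => (\sum_k G k w)%:E).
  by apply/measurable_EFinP; apply: measurable_sum.
rewrite (sum_integral F) // (sum_integral G) // muleCA.
apply: lee_wpmul2l; first by rewrite lee_fin.
rewrite -ge0_integralZl //; last by move=> w _; rewrite lee_fin sumr_ge0.
apply: ge0_le_integral => //.
- by move=> w _; rewrite lee_fin sumr_ge0.
- by apply/measurable_EFinP; apply: measurable_sum.
- apply: measurable_funeM; apply/measurable_EFinP; exact: measurable_sum.
- by move=> w _; rewrite -EFinM lee_fin.
Qed.

Section Measurability.
Variables (R : realType) (d : measure_display) (Omega : measurableType d).
Variables (n : nat) (y : 'I_n -> Omega -> R).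
Hypothesis my : forall k, measurable_fun setT (y k).

Lemma measurable_partial_demand (Q : pred 'I_n) :
  measurable_fun setT (fun w => \sum_(j | Q j) y j w).
Proof.
rewrite (_ : (fun w => _) = fun w => \sum_j (if Q j then y j w else 0)).
  by apply: measurable_sum => j; case: (Q j).
by apply/funext => w; rewrite big_mkcond.
Qed.

Lemma measurable_sold (pi : 'S_n) :
  measurable_fun setT (fun w => \sum_j bought (y ^~ w) pi j).
Proof.
apply: measurable_sum => j; apply: measurable_minr (my j) _.
apply: measurable_maxr => //.
exact: measurable_funB (measurable_partial_demand _).
Qed.

End Measurability.

Theorem mainTheorem3
  (R : realType) (d dV : measure_display)
  (Omega : measurableType d) (P : probability Omega R)
  (V : measurableType dV) (val : V -> R -> R)
  (n : nat) (v : 'I_n -> Omega -> V)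
  (ystar : 'I_n -> V -> R -> R)
  (* valuations: non-negative, non-decreasing, concave on [0,1] *)
  (hval_nonneg : forall x z, 0 <= z <= 1 -> 0 <= val x z)
  (hval_mono : forall x z1 z2, 0 <= z1 -> z1 <= z2 -> z2 <= 1 ->
       val x z1 <= val x z2)
  (hval_concave : forall x z1 z2 t, 0 <= z1 <= 1 -> 0 <= z2 <= 1 ->
       0 <= t <= 1 ->
       t * val x z1 + (1 - t) * val x z2 <= val x (t * z1 + (1 - t) * z2))
  (* y*_i(v_i,p) is a maximizer of z |-> v_i(z) - p z over [0,1] *)
  (hystar_range : forall i x p, 0 < p -> 0 <= ystar i x p <= 1)
  (hystar_max : forall i x p z, 0 < p -> 0 <= z <= 1 ->
       val x z - p * z <= val x (ystar i x p) - p * ystar i x p)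
  (* ... and a measurable selection *)
  (hystar_meas : forall i p, 0 < p -> measurable_fun setT (fun x => ystar i x p))
  (* v_i ~ F_i independently *)
  (hv_meas : forall i, measurable_fun setT (v i))
  (hv_indep : mutually_independent P v)
  (i : 'I_n) (p alpha : R) (hp : 0 < p) (halpha : 0 < alpha) :
  (* E_{v,pi} with pi uniform on permutations, independent of v *)
  ((n`!%:R)^-1%:E * \sum_(pi : 'S_n)
      \int[P]_w (Num.min alpha
                   (\sum_(j | before pi i j) ystar j (v j w) p))%:E <=
   (Num.max alpha (1/2))%:E *
     ((n`!%:R)^-1%:E * \sum_(pi : 'S_n)
      \int[P]_w (\sum_(j < n)
                   bought (fun k => ystar k (v k w) p) pi j)%:E))%E.
Proof.
pose y k w := ystar k (v k w) p.
have y01 w k : 0 <= y k w <= 1 by apply: hystar_range.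
have my k : measurable_fun setT (y k).
  exact: measurableT_comp (hystar_meas k p hp) (hv_meas k).
apply: (@weighted_sum_integral_le _ _ _ P _
  (fun pi w => Num.min alpha (\sum_(j | before pi i j) y j w))
  (fun pi w => \sum_j bought (y ^~ w) pi j)).
- by rewrite le_max (ltW halpha).
- by rewrite invr_ge0 ler0n.
- move=> pi; apply: measurable_minr => //.
  exact: measurable_partial_demand.
- exact: measurable_sold.
- move=> pi w; rewrite le_min (ltW halpha) /=.
  by apply: sumr_ge0 => j _; case/andP: (y01 w j).
- by move=> pi w; apply: sumr_ge0 => j _; apply: bought_ge0.
- by move=> w; apply: (sum_min_before_le (y01 w)).
Qed.
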